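(* Let $n\ge1$, $l\ge n$, let $(a_{ik})$ be a real $l\times n$ matrix, let $E_1,\dots,E_l\subset\mathbb{R}^n$ be measurable sets of finite measure, and let $1\le t\le n$. Then $$\sup_{y_j\in\mathcal{S}_{e_t}(E_j),\,j=1,\dots,l}\det\Big(0,\sum_{i=1}^{l}a_{i1}y_i,\dots,\sum_{i=1}^{l}a_{in}y_i\Big)\le\sup_{y_j\in E_j,\,j=1,\dots,l}\det\Big(0,\sum_{i=1}^{l}a_{i1}y_i,\dots,\sum_{i=1}^{l}a_{in}y_i\Big).$$ In particular (taking appropriate matrices $(a_{ik})$), $\sup_{y_j\in\mathcal{S}_{e_t}(E_j)}\det(0,y_1,\dots,y_n)\le\sup_{y_j\in E_j}\det(0,y_1,\dots,y_n)$ and $\sup_{y_j\in\mathcal{S}_{e_t}(E_j)}\det(y_1,\dots,y_{n+1})\le\sup_{y_j\in E_j}\det(y_1,\dots,y_{n+1})$.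
   Context: $\{e_1,\dots,e_n\}$ is the standard basis of $\mathbb{R}^n$. For $z_1,\dots,z_n\in\mathbb{R}^n$, $\det(0,z_1,\dots,z_n)$ denotes $|\det M|$ where $M$ is the $n\times n$ matrix with columns $z_1,\dots,z_n$. For $y_1,\dots,y_{n+1}\in\mathbb{R}^n$, $\det(y_1,\dots,y_{n+1})$ denotes the absolute value of the determinant of the matrix with columns $y_1-y_{n+1},\dots,y_n-y_{n+1}$ (equal to $n!$ times the volume of the simplex with these vertices). For a unit vector $u\in\mathbb{R}^n$ and a measurable $A\subset\mathbb{R}^n$, the Steiner symmetrisation is $\mathcal{S}_u(A)=\{tu+y:\ y\in u^\perp,\ A\cap(\mathbb{R}u+y)\neq\emptyset,\ |t|\le |A\cap(\mathbb{R}u+y)|/2\}$, where $|A\cap(\mathbb{R}u+y)|$ is one-dimensional Lebesgue measure on the line $\mathbb{R}u+y$. *)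

From HB Require Import structures.
From mathcomp Require Import all_boot all_order all_algebra.
From mathcomp Require Import all_classical all_reals all_analysis.
Set Implicit Arguments. Unset Strict Implicit. Unset Printing Implicit Defensive.
Import Order.TTheory GRing.Theory Num.Theory.
Local Open Scope classical_set_scope.
Local Open Scope ring_scope.

Definition ebasis (R : realType) (n : nat) (t : 'I_n) : 'rV[R]_n :=
  \row_(j < n) (j == t)%:R.

Definition box (R : realType) (n : nat) (a b : 'rV[R]_n) : set 'rV[R]_n :=
  [set x | forall i, a ord0 i <= x ord0 i <= b ord0 i].
Definition box_vol (R : realType) (n : nat) (a b : 'rV[R]_n) : R :=
  \prod_(i < n) (b ord0 i - a ord0 i).

Definition leb_outer (R : realType) (n : nat) (A : set 'rV[R]_n) : \bar R :=
  ereal_inf [set (\sum_(0 <= k <oo) (box_vol (ab.1 k) (ab.2 k))%:E)%E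
            | ab in [set ab : (nat -> 'rV[R]_n) * (nat -> 'rV[R]_n) |
                (forall k i, ab.1 k ord0 i <= ab.2 k ord0 i) /\
                A `<=` \bigcup_k box (ab.1 k) (ab.2 k)]].

Definition leb_measurable (R : realType) (n : nat) (A : set 'rV[R]_n) : Prop :=
  (@leb_outer R n).-caratheodory A.

Definition section_measure (R : realType) (n : nat) (t : 'I_n)
    (A : set 'rV[R]_n) (y : 'rV[R]_n) : \bar R :=
  leb_outer [set r : 'rV[R]_1 | A (y + r ord0 ord0 *: ebasis R t)].

(* Steiner symmetrisation S_{e_t}(A): points s e_t + y with y ⊥ e_t,
   the line through y meets A, and |s| <= |A ∩ line| / 2. *)
Definition steiner (R : realType) (n : nat) (t : 'I_n) (A : set 'rV[R]_n)
  : set 'rV[R]_n :=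
  [set x : 'rV[R]_n | let y : 'rV[R]_n := x - x ord0 t *: ebasis R t in
     (exists s : R, A (y + s *: ebasis R t)) /\
     ((`|x ord0 t| *+ 2)%:E <= section_measure t A y)%E].

(* det(0, sum_i a_i1 y_i, ..., sum_i a_in y_i): |det| of the n x n matrix
   whose k-th column is sum_i a_ik y_i. *)
Definition comb_det (R : realType) (l n : nat) (a : 'M[R]_(l, n))
  (y : 'I_l -> 'rV[R]_n) : R :=
  `| \det (\matrix_(j < n, k < n) \sum_(i < l) a i k * y i ord0 j) |.

Definition sup_comb_det (R : realType) (l n : nat) (a : 'M[R]_(l, n))
  (F : 'I_l -> set 'rV[R]_n) : \bar R :=
  ereal_sup [set (comb_det a y)%:E | y in [set y : 'I_l -> 'rV[R]_n | forall j, F j (y j)]].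

From HB Require Import structures.
From mathcomp Require Import all_boot all_order all_algebra.
From mathcomp Require Import all_classical all_reals all_analysis.
From mathcomp Require Import lra.
Import Order.TTheory GRing.Theory Num.Theory.
Local Open Scope classical_set_scope.
Local Open Scope ring_scope.
Set Implicit Arguments. Unset Strict Implicit. Unset Printing Implicit Defensive.

(* Write each y_i as p_i + s_i e_t with p_i orthogonal to e_t.  Expanding the
   determinant along row t shows that it is a linear form L(s) = sum_i b_i s_i
   of the t-coordinates alone.  A point of S_{e_t}(E_i) with t-coordinate s_i
   lies on a line whose section through E_i has length at least 2|s_i|, so it
   contains points p_i + u_i e_t and p_i + v_i e_t with u_i - v_i almost 2|s_i|.
   Choosing simultaneously, for every i, the endpoint that maximises (resp.
   minimises) b_i u, the two resulting values of L straddle an interval of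
   length almost 2 sum_i |b_i s_i| >= 2 |L(s)|, so one of them has absolute
   value almost |L(s)|. *)

Lemma leb_outer1_le_interval (R : realType) (A : set 'rV[R]_1) (c D : R) :
  0 <= D -> (forall r, A r -> c - D <= r ord0 ord0 <= c) ->
  (leb_outer A <= D%:E)%E.
Proof.
move=> D_ge0 AcD; apply: ge_ereal_inf.
pose ab := ((fun k : nat => if k == 0%N then const_mx (c - D) else 0 : 'rV[R]_1),
            (fun k : nat => if k == 0%N then const_mx c else 0 : 'rV[R]_1)).
exists (\sum_(0 <= k <oo) (box_vol (ab.1 k) (ab.2 k))%:E)%E.
  exists ab => //; split.
    by move=> [|k] i /=; rewrite ?mxE ?lerBlDr ?lerDl.
  by move=> r Ar; exists 0%N => // i; rewrite !mxE (ord1 i); exact: AcD.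
rewrite (nneseries_split 0 1).
  rewrite eseries0 ?adde0.
    by rewrite big_nat1 /= /box_vol big_ord1 !mxE opprB addrC subrK.
  by move=> [|k] //= _ _; rewrite /box_vol big_ord1 !mxE subrr.
move=> [|k] _ /=; rewrite /box_vol big_ord1 !mxE ?subrr // lee_fin.
by rewrite opprB addrC subrK.
Qed.

Lemma leb_outer1_gt_spread (R : realType) (A : set 'rV[R]_1) (D : R) :
  A !=set0 -> (D%:E < leb_outer A)%E ->
  exists u v, [/\ A u, A v & D < u ord0 ord0 - v ord0 ord0].
Proof.
move=> [x0 Ax0] D_lt_A.
apply/not_existsP => no_spread.
have spreadA u v : A u -> A v -> u ord0 ord0 - v ord0 ord0 <= D.
  move=> Au Av; rewrite leNgt; apply/negP => Duv.
  by apply: (no_spread u); exists v.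
have D_ge0 : 0 <= D by have := spreadA _ _ Ax0 Ax0; rewrite subrr.
pose S := [set r ord0 ord0 | r in A].
have S_neq0 : S !=set0 by exists (x0 ord0 ord0), x0.
have supS : has_sup S.
  by split=> //; exists (x0 ord0 ord0 + D) => _ [r Ar <-]; rewrite -lerBlDl spreadA.
suff : (leb_outer A <= D%:E)%E by rewrite leNgt D_lt_A.
apply: (@leb_outer1_le_interval _ _ (sup S)) => // r Ar; apply/andP; split.
  rewrite lerBlDr; apply: ge_sup => // _ [u Au <-].
  by have := spreadA u r Au Ar; lra.
by apply: sup_upper_bound => //; exists r.
Qed.

Lemma steiner_section_spread (R : realType) (n : nat) (t : 'I_n)
    (A : set 'rV[R]_n) (x : 'rV[R]_n) (d : R) :
  0 < d -> steiner t A x ->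
  exists uv : R * R,
    let p := x - x ord0 t *: ebasis R t in
    [/\ A (p + uv.1 *: ebasis R t), A (p + uv.2 *: ebasis R t)
       & `|x ord0 t| *+ 2 - d < uv.1 - uv.2].
Proof.
move=> d_gt0 [[s As] wide]; set p := x - _.
pose sect := [set r : 'rV[R]_1 | A (p + r ord0 ord0 *: ebasis R t)].
have sect_neq0 : sect !=set0 by exists (const_mx s); rewrite /sect /= mxE.
have sect_wide : ((`|x ord0 t| *+ 2 - d)%:E < leb_outer sect)%E.
  by apply: lt_le_trans wide; rewrite lte_fin; lra.
have [u [v [Au Av duv]]] := leb_outer1_gt_spread sect_neq0 sect_wide.
by exists (u ord0 ord0, v ord0 ord0).
Qed.

Lemma comb_det_linear_coord (R : realType) (n l : nat) (a : 'M[R]_(l, n))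
    (t : 'I_n) (p : 'I_l -> 'rV[R]_n) :
  (forall i, p i ord0 t = 0) ->
  exists b : 'I_l -> R, forall s : 'I_l -> R,
    comb_det a (fun i => p i + s i *: ebasis R t) = `|\sum_i b i * s i|.
Proof.
move=> pt0.
pose M (s : 'I_l -> R) :=
  \matrix_(j < n, k < n) \sum_(i < l) a i k * (p i + s i *: ebasis R t) ord0 j.
exists (fun i => \sum_k a i k * cofactor (M (fun=> 0)) t k) => s.
rewrite /comb_det -/(M s) (expand_det_row _ t); congr `|_|.
have cofactorE k : cofactor (M s) t k = cofactor (M (fun=> 0)) t k.
  rewrite /cofactor; congr (_ * \det _); apply/matrixP => i j; rewrite !mxE.
  apply: eq_bigr => i' _; rewrite !mxE eq_sym (negbTE (neq_lift t i)).
  by rewrite mulr0 !mul0r !addr0.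
have rowtE k : M s t k = \sum_i a i k * s i.
  by rewrite mxE; apply: eq_bigr => i _; rewrite !mxE pt0 eqxx mulr1 add0r.
under eq_bigr => k _ do rewrite cofactorE rowtE big_distrl.
rewrite exchange_big /=; apply: eq_bigr => i _; rewrite big_distrl /=.
by apply: eq_bigr => k _; rewrite mulrAC.
Qed.

Lemma norm_linear_le_extreme_choice (R : realFieldType) (l : nat)
    (b s u v : 'I_l -> R) (d : R) :
  (forall i, `|s i| *+ 2 - d <= u i - v i) ->
  exists w : 'I_l -> R, (forall i, w i = u i \/ w i = v i) /\
    `|\sum_i b i * s i| <= `|\sum_i b i * w i| + d * (\sum_i `|b i|) / 2.
Proof.
move=> uv_wide.
pose U i := if 0 <= b i then u i else v i.
pose V i := if 0 <= b i then v i else u i.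
have UV_wide i : `|b i| * (`|s i| *+ 2 - d) <= b i * U i - b i * V i.
  rewrite -mulrBr /U /V; case: (lerP 0 (b i)) => [b_ge0|b_lt0].
    by rewrite ger0_norm // ler_wpM2l.
  by rewrite ltr0_norm //; have := uv_wide i; nra.
have sum_wide : (\sum_i `|b i| * `|s i|) *+ 2 - d * \sum_i `|b i|
                <= \sum_i b i * U i - \sum_i b i * V i.
  rewrite -sumrB mulr_sumr -sumrMnl -sumrB; apply: ler_sum => i _.
  by apply: le_trans (UV_wide i); rewrite mulrBr mulrnAr [d * _]mulrC.
have norm_s : `|\sum_i b i * s i| <= \sum_i `|b i| * `|s i|.
  by apply: le_trans (ler_norm_sum _ _ _) _; apply: ler_sum => i _; rewrite normrM.
have normU := ler_norm (\sum_i b i * U i).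
have normV : - \sum_i b i * V i <= `|\sum_i b i * V i| by rewrite -normrN ler_norm.
have [UV|VU] := leP `|\sum_i b i * V i| `|\sum_i b i * U i|.
- exists U; split; first by move=> i; rewrite /U; case: ifP; [left|right].
  lra.
- exists V; split; first by move=> i; rewrite /V; case: ifP; [right|left].
  lra.
Qed.

Lemma comb_det_le_sup (R : realType) (l n : nat) (a : 'M[R]_(l, n))
    (F : 'I_l -> set 'rV[R]_n) (y : 'I_l -> 'rV[R]_n) :
  (forall j, F j (y j)) -> ((comb_det a y)%:E <= sup_comb_det a F)%E.
Proof. by move=> Fy; apply: ereal_sup_ubound; exists y. Qed.

Theorem mainTheorem8 (R : realType) (n l : nat) (a : 'M[R]_(l, n))
  (E : 'I_l -> set 'rV[R]_n) (t : 'I_n) :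
  (1 <= n)%N -> (n <= l)%N ->
  (forall j, leb_measurable (E j)) ->
  (forall j, (leb_outer (E j) < +oo)%E) ->
  (sup_comb_det a (fun j => steiner t (E j)) <= sup_comb_det a E)%E.
Proof.
move=> _ _ _ _; apply: ge_ereal_sup => _ [y Sy <-].
pose e := ebasis R t.
pose p i := y i - y i ord0 t *: e.
have [|b detE] := @comb_det_linear_coord R n l a t p.
  by move=> i; rewrite !mxE eqxx mulr1 subrr.
have -> : comb_det a y = `|\sum_i b i * y i ord0 t|.
  by rewrite -detE; congr comb_det; apply: funext => i; rewrite /p subrK.
apply/lee_addgt0Pr => eps eps_gt0.
pose B := \sum_i `|b i|.
have B_ge0 : 0 <= B by apply: sumr_ge0 => i _.
pose d := eps / (B + 1).
have d_gt0 : 0 < d by rewrite divr_gt0 // ltr_wpDl.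
have dB_le : d * B <= eps.
  by rewrite /d mulrAC ler_pdivrMr ?ltr_wpDl // ler_pM2l ?lerDl.
have [uv uvP] := boolp.choice (fun i => steiner_section_spread d_gt0 (Sy i)).
have [|w [wuv detw]] := @norm_linear_le_extreme_choice R l b (fun i => y i ord0 t)
                          (fun i => (uv i).1) (fun i => (uv i).2) d.
  by move=> i; have [_ _ /ltW] := uvP i.
have Ew : forall j, E j (p j + w j *: e).
  by move=> j; have [] := uvP j; case: (wuv j) => ->.
apply: le_trans (leeD2r _ (comb_det_le_sup a Ew)).
rewrite detE -EFinD lee_fin (le_trans detw) // lerD2l -/B.
by rewrite ler_pdivrMr // (le_trans dB_le) // ler_peMr ?ler1n // ltW.
Qed.
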